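(* Let $(X,d)$ be a compact metric space, $T:X\to X$ continuous, $Z\subset X$ non-empty, and $\Phi=\{\varphi_n:X\to\mathbb{R}\}_{n\in\mathbb{N}}$ a sequence of continuous functions satisfying the tempered distortion condition $\lim_{\varepsilon\to 0}\limsup_{n\to\infty}\varphi_n(\varepsilon)/n=0$, where $\varphi_n(\varepsilon)=\sup\{|\varphi_n(x)-\varphi_n(y)|: x\in X,\ y\in B_n(x,e^{-n\varepsilon})\}$. Then for every $\theta>0$ there exists $\varepsilon_0>0$ such that for every $0<\varepsilon<\varepsilon_0$ there exists $N_0\in\mathbb{N}$ such that for all $N\ge N_0$ and all $s\in\mathbb{R}$, $$\mathcal{M}^{s+\theta}_{N,\varepsilon/2}(Z,\Phi)\le W^s_{N,\varepsilon}(Z,\Phi)\le M^s_{N,\varepsilon}(Z,\Phi).$$ Consequently $P^{\tilde B}_Z(T,\Phi)=P^{\widetilde{WB}}_Z(T,\Phi)$.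
   Context: The neutralized Bowen ball is $B_n(x,e^{-n\varepsilon})=\{y\in X: d(T^jx,T^jy)<e^{-n\varepsilon}\ \forall\,0\le j\le n-1\}$. For $\varepsilon>0$, $N\in\mathbb{N}$, $s\in\mathbb{R}$: $M^s_{N,\varepsilon}(Z,\Phi)=\inf\sum_{i\in I}\exp[-n_is+\sup_{y\in B_{n_i}(x_i,e^{-n_i\varepsilon})}\varphi_{n_i}(y)]$, infimum over all finite or countable covers $\{B_{n_i}(x_i,e^{-n_i\varepsilon})\}_{i\in I}$ of $Z$ with $n_i\ge N$, $x_i\in X$; $M^s_\varepsilon=\lim_{N\to\infty}M^s_{N,\varepsilon}$; $M_\varepsilon(Z,\Phi)=\inf\{s:M^s_\varepsilon(Z,\Phi)=0\}=\sup\{s:M^s_\varepsilon(Z,\Phi)=\infty\}$; $P^{\tilde B}_Z(T,\Phi)=\lim_{\varepsilon\to0}M_\varepsilon(Z,\Phi)$. $\mathcal{M}^s_{N,\varepsilon}(Z,\Phi)=\inf\sum_{i\in I}\exp[-n_is+\varphi_{n_i}(x_i)]$, infimum over the same class of covers. Weighted version: $W^s_{N,\varepsilon}(Z,\Phi)=\inf\sum_{i\in I}c_i\exp[-n_is+\sup_{y\in B_{n_i}(x_i,e^{-n_i\varepsilon})}\varphi_{n_i}(y)]$, infimum over all finite or countable families $\{(B_{n_i}(x_i,e^{-n_i\varepsilon}),c_i)\}_{i\in I}$ with $0<c_i<\infty$, $x_i\in X$, $n_i\ge N$ and $\sum_ic_i\chi_{B_{n_i}(x_i,e^{-n_i\varepsilon})}\ge\chi_Z$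 ($\chi_A$ the indicator of $A$); $W^s_\varepsilon(Z,\Phi)=\lim_{N\to\infty}W^s_{N,\varepsilon}(Z,\Phi)$; $W_\varepsilon(Z,\Phi)=\inf\{s:W^s_\varepsilon(Z,\Phi)=0\}=\sup\{s:W^s_\varepsilon(Z,\Phi)=\infty\}$; $P^{\widetilde{WB}}_Z(T,\Phi)=\lim_{\varepsilon\to0}W_\varepsilon(Z,\Phi)$. *)

From HB Require Import structures.
From mathcomp Require Import all_boot all_order all_algebra.
From mathcomp Require Import all_classical all_reals all_analysis.
Set Implicit Arguments. Unset Strict Implicit. Unset Printing Implicit Defensive.
Import Order.TTheory GRing.Theory Num.Theory.
Import numFieldNormedType.Exports.
Local Open Scope classical_set_scope.
Local Open Scope ring_scope.

Section Pressure.
Context {R : realType} {X : metricType R}.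
Implicit Types (T : X -> X) (phi : nat -> X -> R) (Z : set X).

Definition bowen_ball T (n : nat) (x : X) (r : R) : set X :=
  [set y | forall j, (j < n)%N -> mdist (iter j T x) (iter j T y) < r].

Definition nball T (n : nat) (x : X) (eps : R) : set X :=
  bowen_ball T n x (expR (- (n%:R * eps))).

Definition sup_ball T phi (n : nat) (x : X) (eps : R) : \bar R :=
  ereal_sup [set (phi n y)%:E | y in nball T n x eps].

(* admissible covers: index set I (finite or countable, subset of nat),
   centres x_i, times n_i >= N, covering Z *)
Definition is_cover T Z (N : nat) (eps : R) (I : set nat) (x : nat -> X)
  (n : nat -> nat) : Prop :=
  (forall i, I i -> (N <= n i)%N) /\
  Z `<=` \bigcup_(i in I) nball T (n i) (x i) eps.

Definition M_N T phi Z (s : R) (N : nat) (eps : R) : \bar R :=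
  ereal_inf [set v | exists (I : set nat) (x : nat -> X) (n : nat -> nat),
    is_cover T Z N eps I x n /\
    v = (\esum_(i in I) ((expR (- ((n i)%:R * s)))%:E
                           * expeR (sup_ball T phi (n i) (x i) eps)))%E].

(* calligraphic M^s_{N,eps}(Z,Phi): the potential is evaluated at the centre *)
Definition Mc_N T phi Z (s : R) (N : nat) (eps : R) : \bar R :=
  ereal_inf [set v | exists (I : set nat) (x : nat -> X) (n : nat -> nat),
    is_cover T Z N eps I x n /\
    v = (\esum_(i in I) (expR (- ((n i)%:R * s) + phi (n i) (x i)))%:E)%E].

Definition is_wfamily T Z (N : nat) (eps : R) (I : set nat) (x : nat -> X)
  (n : nat -> nat) (c : nat -> R) : Prop :=
  (forall i, I i -> (N <= n i)%N /\ 0 < c i) /\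
  (forall z, Z z ->
     (1 <= \esum_(i in I) (c i * \1_(nball T (n i) (x i) eps) z)%:E)%E).

Definition W_N T phi Z (s : R) (N : nat) (eps : R) : \bar R :=
  ereal_inf [set v | exists (I : set nat) (x : nat -> X) (n : nat -> nat)
                            (c : nat -> R),
    is_wfamily T Z N eps I x n c /\
    v = (\esum_(i in I) ((c i * expR (- ((n i)%:R * s)))%:E
                           * expeR (sup_ball T phi (n i) (x i) eps)))%E].

Definition M_s T phi Z (s eps : R) : \bar R := limn (fun N => M_N T phi Z s N eps).
Definition W_s T phi Z (s eps : R) : \bar R := limn (fun N => W_N T phi Z s N eps).

Definition M_eps T phi Z (eps : R) : \bar R :=
  ereal_inf [set s%:E | s in [set s | M_s T phi Z s eps = 0%E]].
Definition W_eps T phi Z (eps : R) : \bar R :=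
  ereal_inf [set s%:E | s in [set s | W_s T phi Z s eps = 0%E]].

Definition P_B T phi Z : \bar R := lim (M_eps T phi Z eps @[eps --> 0^'+]).
Definition P_WB T phi Z : \bar R := lim (W_eps T phi Z eps @[eps --> 0^'+]).

Definition distortion T phi (n : nat) (eps : R) : \bar R :=
  ereal_sup [set v | exists (x y : X), nball T n x eps y /\
                      v = (`|phi n x - phi n y|)%:E].

Definition tempered_distortion T phi : Prop :=
  (fun eps => limn_esup (fun n => (distortion T phi n eps * (n%:R^-1)%:E)%E))
    @ 0^'+ --> 0%E.

End Pressure.

From HB Require Import structures.
From mathcomp Require Import all_boot all_order all_algebra.
From mathcomp Require Import all_classical all_reals all_analysis.
From mathcomp Require Import ring lra.
Import Order.TTheory GRing.Theory Num.Theory.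
Import numFieldNormedType.Exports.
Local Open Scope classical_set_scope.
Local Open Scope ring_scope.

(* [W <= M] because a cover is a weighted family with all weights 1.  For the
   other inequality, sort the balls of a weighted family by their time
   [m >= N].  Since the thresholds [e^(-m theta)] sum to less than 1, each
   [z] in [Z] is heavy at some level [m]: the level-[m] balls containing [z]
   carry total weight more than [e^(-m theta)].  By compactness a maximal
   [2 e^(-m eps)]-separated set of heavy points is finite; the balls of radius
   [e^(-m eps/2) >= 2 e^(-m eps)] around it cover the heavy points, and each
   level-[m] ball of radius [e^(-m eps)] contains at most one of its points.
   Charging each such point to the balls containing it bounds the
   calligraphic sum at [s + theta] by the weighted sum at [s].
   Tempered distortion makes the sup over a ball exceed the value at its
   centre by at most [n theta] for large [n], so both critical values at [eps]
   lie between the calligraphic critical values at [eps/2] and at [eps] (plus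
   a term tending to 0); the latter is monotone in [eps], hence converges. *)

Section BowenBalls.
Context {R : realType} {X : metricType R} {T : X -> X}.

Lemma bowen_ball_sym {n x y r} : bowen_ball T n x r y -> bowen_ball T n y r x.
Proof. by move=> Bxy j jn; rewrite metric_sym; exact: Bxy. Qed.

Lemma bowen_ball_triangle {n x y z r r'} :
  bowen_ball T n x r y -> bowen_ball T n y r' z -> bowen_ball T n x (r + r') z.
Proof.
move=> Bxy Byz j jn; rewrite (le_lt_trans (metric_triangle _ (iter j T y) _))//.
by rewrite ltrD//; [exact: Bxy | exact: Byz].
Qed.

Lemma le_bowen_ball {n x r r'} : r <= r' -> bowen_ball T n x r `<=` bowen_ball T n x r'.
Proof. by move=> rr' y Bxy j jn; rewrite (lt_le_trans _ rr')//; exact: Bxy. Qed.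

Lemma bowen_ball_center {n x r} : 0 < r -> bowen_ball T n x r x.
Proof. by move=> r0 j _; rewrite mdistxx. Qed.

Lemma le_nball {n x eps eps'} : eps' <= eps -> nball T n x eps `<=` nball T n x eps'.
Proof. by move=> le_eps; apply: le_bowen_ball; rewrite ler_expR lerN2 ler_wpM2l. Qed.

Lemma nball_center {n x eps} : nball T n x eps x.
Proof. exact/bowen_ball_center/expR_gt0. Qed.

Hypothesis contT : continuous T.

Lemma continuous_iter j : continuous (iter j T).
Proof.
elim: j => [|j IHj] x /=; first exact: cvg_id.
exact: (@continuous_comp _ _ _ (iter j T) T x (IHj x) (contT _)).
Qed.

Lemma nbhs_bowen_ball n x r : 0 < r -> nbhs x (bowen_ball T n x r).
Proof.
move=> r0.
have nbhs_iter j : nbhs x [set y | mdist (iter j T x) (iter j T y) < r].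
  have := continuous_iter j x (ball (iter j T x) r) (nbhsx_ballx _ _ r0).
  by rewrite ballEmdist.
elim: n => [|n IHn]; first by apply: filterS filterT => y _ j; rewrite ltn0.
apply: filterS (filterI IHn (nbhs_iter n)) => y [Bxy dny] j.
by rewrite ltnS leq_eqVlt => /orP[/eqP-> | /Bxy].
Qed.

Lemma compact_bowen_cover n r : compact [set: X] -> 0 < r ->
  exists l : seq X, forall x, exists2 y, y \in l & bowen_ball T n y r x.
Proof.
move=> cpt r0.
pose F := filter_from [set: seq X] (fun l0 => [set l : seq X | {subset l0 <= l}]).
have FF : Filter F.
  apply: filter_from_filter; first by exists [::].
  move=> l1 l2 _ _; exists (l1 ++ l2) => // l /= sub_l.
  by split => y yl; apply: sub_l; rewrite mem_cat yl ?orbT.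
have [x _|l _ covl] := (compact_near_coveringP _).1 cpt (seq X) F
    (fun l x => exists2 y, y \in l & bowen_ball T n y r x) FF.
  exists (bowen_ball T n x r, [set l : seq X | x \in l]).
    split; first exact: nbhs_bowen_ball.
    by exists [:: x] => // l /= sub_l; apply: sub_l; rewrite mem_seq1.
  by move=> [y l] [/= Bxy xl]; exists x.
by exists l => x; exact: (covl l (fun _ h => h) x I).
Qed.

End BowenBalls.

Section Separated.
Context {R : realType} {X : metricType R}.
Variables (T : X -> X) (n : nat) (r : R).

Definition bowen_separated (K : seq X) := uniq K /\
  {in K &, forall a b, a != b -> ~ bowen_ball T n a (r + r) b}.

Lemma bowen_separated_size_le (l : seq X) K :
  (forall x, exists2 y, y \in l & bowen_ball T n y r x) -> bowen_separated K ->
  (size K <= size l)%N.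
Proof.
move=> covl [uniqK sepK].
pose g a := projT1 (cid2 (covl a)).
have gl a : g a \in l by rewrite /g; case: cid2.
have Bga a : bowen_ball T n (g a) r a by rewrite /g; case: cid2.
have g_inj : {in K &, injective g}.
  move=> a b aK bK gab; case: (eqVneq a b) => // ab; case: (sepK a b aK bK ab).
  apply: (bowen_ball_triangle (bowen_ball_sym (Bga a))).
  by rewrite gab; exact: Bga.
rewrite -(size_map g); apply: uniq_leq_size; first by rewrite map_inj_in_uniq.
by move=> y /mapP[a _ ->].
Qed.

(* If no separated subset of [A] were [2r]-dense in [A], separated subsets of
   [A] could be grown one point at a time past the size bound [M]. *)
Lemma exists_maximal_bowen_separated (A : set X) (M : nat) : 0 < r ->
  (forall K, bowen_separated K -> (size K <= M)%N) ->
  exists K, [/\ bowen_separated K, (forall a, a \in K -> A a) &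
    forall z, A z -> exists2 a, a \in K & bowen_ball T n a (r + r) z].
Proof.
move=> r0 bounded; apply: contrapT => no_net.
have grow k : exists K, [/\ bowen_separated K, (forall a, a \in K -> A a) & size K = k].
  elim: k => [|k [K [[uniqK sepK] KA <-]]]; first by exists [::].
  have [z [Az farz]] : exists z, A z /\
      forall a, a \in K -> ~ bowen_ball T n a (r + r) z.
    apply: contrapT => all_near; apply: no_net; exists K; split => // z Az.
    apply: contrapT => farz; apply: all_near; exists z; split => // a aK Baz.
    by apply: farz; exists a.
  have zK : z \notin K.
    by apply/negP => zK; apply: (farz z zK); exact/bowen_ball_center/addr_gt0.
  exists (z :: K); split => //; last by move=> a; rewrite inE => /orP[/eqP-> | /KA].
  split; first by rewrite /= zK.
  move=> a b; rewrite !inE => /orP[/eqP-> | aK] /orP[/eqP-> | bK] ab.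
  - by rewrite eqxx in ab.
  - by move/bowen_ball_sym; exact: farz.
  - exact: farz.
  - exact: sepK.
have [K [sepK _ sizeK]] := grow M.+1.
by have := bounded K sepK; rewrite sizeK ltnn.
Qed.

End Separated.

Lemma compact_maximal_bowen_separated {R : realType} {X : metricType R} (T : X -> X)
    n r (A : set X) :
  compact [set: X] -> continuous T -> 0 < r ->
  exists K, [/\ bowen_separated T n r K, (forall a, a \in K -> A a) &
    forall z, A z -> exists2 a, a \in K & bowen_ball T n a (r + r) z].
Proof.
move=> cpt contT r0; have [l covl] := compact_bowen_cover contT n r cpt r0.
apply: (@exists_maximal_bowen_separated _ _ T n r A (size l) r0) => K.
exact: bowen_separated_size_le covl.
Qed.

Section ExtendedSums.
Context {R : realType}.

Lemma subset_le_esum (I : choiceType) (S1 S2 : set I) (a : I -> \bar R) :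
  S1 `<=` S2 -> (\esum_(i in S1) a i <= \esum_(i in S2) a i)%E.
Proof.
move=> S12; apply: ge_ereal_sup => _ [F [finF FS] <-]; apply: ereal_sup_ubound.
by exists F => //; split => //; exact: subset_trans FS S12.
Qed.

Lemma lt_esum_mulr {I : choiceType} {S : set I} {c : I -> R} {t : R} (u : R) :
  0 <= u -> (t%:E < \esum_(i in S) (c i)%:E)%E ->
  ((t * u)%:E <= \esum_(i in S) (c i * u)%:E)%E.
Proof.
move=> u0 /ereal_sup_gt[_ [F [finF FS] <-] tF].
apply: esum_ge; exists F => //.
rewrite fsumEFin //; rewrite fsumEFin // in tF.
by rewrite lee_fin -mulr_fsuml ler_wpM2r // ltW.
Qed.

Lemma esum_geometric_tail (q : R) N : 0 <= q < 1 ->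
  \esum_(i in [set i | (N <= i)%N]) (q ^+ i)%:E = (q ^+ N / (1 - q))%:E.
Proof.
move=> /andP[q0 q1].
rewrite -nneseries_esum; last by move=> i _; rewrite lee_fin exprn_ge0.
rewrite -[LHS](@eseries_cond _ _ xpredT N) -nneseries_addn; last first.
  by move=> i; rewrite lee_fin exprn_ge0.
apply/cvg_lim => //; apply/cvg_EFin; first by apply: nearW => k; rewrite /= sumEFin.
have -> : fine \o (fun k => \sum_(0 <= i < k) (q ^+ (i + N))%:E) =
    series (geometric (q ^+ N) q).
  apply/funext => k /=; rewrite sumEFin /series /=.
  by apply: eq_bigr => i _; rewrite exprD mulrC.
by apply: cvg_geometric_series; rewrite ger0_norm.
Qed.

End ExtendedSums.

Section CriticalExponent.
Context {R : realType}.

Definition critical_exponent (F : R -> \bar R) : \bar R :=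
  ereal_inf [set s%:E | s in [set s | F s = 0%E]].

Lemma critical_exponent_le_shift (F G : R -> \bar R) (theta : R) :
  (forall s, (0 <= F s)%E) -> (forall s, (F (s + theta)%R <= G s)%E) ->
  (critical_exponent F <= critical_exponent G + theta%:E)%E.
Proof.
move=> F0 FG; rewrite -leeBlDr //; apply/ereal_infP => _ [s Gs0 <-].
have Fs0 : F (s + theta) = 0%E by apply/eqP; rewrite eq_le F0 andbT -Gs0 FG.
by rewrite leeBlDr //; apply: ereal_inf_lbound; exists (s + theta).
Qed.

Lemma critical_exponent_limn_le_shift (F G : R -> nat -> \bar R) (theta : R) :
  (forall s, nondecreasing_seq (F s)) -> (forall s, nondecreasing_seq (G s)) ->
  (forall s N, (0 <= F s N)%E) ->
  (forall s, \forall N \near \oo, (F (s + theta)%R N <= G s N)%E) ->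
  (critical_exponent (fun s => limn (F s)) <=
   critical_exponent (fun s => limn (G s)) + theta%:E)%E.
Proof.
move=> ndF ndG F0 FG; apply: critical_exponent_le_shift => s.
  by apply: lime_ge; [exact: ereal_nondecreasing_is_cvgn | exact: nearW].
by apply: lee_lim; [exact: ereal_nondecreasing_is_cvgn.. | exact: FG].
Qed.

Lemma critical_exponent_limn_le (F G : R -> nat -> \bar R) :
  (forall s, nondecreasing_seq (F s)) -> (forall s, nondecreasing_seq (G s)) ->
  (forall s N, (0 <= F s N)%E) -> (forall s N, (F s N <= G s N)%E) ->
  (critical_exponent (fun s => limn (F s)) <=
   critical_exponent (fun s => limn (G s)))%E.
Proof.
move=> ndF ndG F0 FG; rewrite -[leRHS]adde0.
apply: critical_exponent_limn_le_shift => // s; rewrite addr0.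
exact: nearW.
Qed.

End CriticalExponent.

Lemma limn_esup_lt_near {R : realType} (u : (\bar R)^nat) (b : \bar R) :
  (limn_esup u < b)%E -> \forall n \near \oo, (u n < b)%E.
Proof.
rewrite limn_esup_lim (cvg_lim (@ereal_hausdorff R) (@cvg_esups_inf _ u)).
move=> /ereal_inf_lt[_ [N _ <-] ltb]; exists N => // n /= Nn.
by apply: le_lt_trans ltb; apply: ereal_sup_ubound; exists n.
Qed.

Section Covers.
Context {R : realType} {X : metricType R}.
Variables (T : X -> X) (phi : nat -> X -> R) (Z : set X).

Lemma nondecreasing_M_N s eps : nondecreasing_seq (fun N => M_N T phi Z s N eps).
Proof.
move=> N N' NN'; apply: ereal_inf_le_tmp => _ [I [x [n [[Nn covZ] ->]]]].
by exists I, x, n; split => //; split => // i Ii; exact: leq_trans NN' (Nn i Ii).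
Qed.

Lemma nondecreasing_Mc_N s eps : nondecreasing_seq (fun N => Mc_N T phi Z s N eps).
Proof.
move=> N N' NN'; apply: ereal_inf_le_tmp => _ [I [x [n [[Nn covZ] ->]]]].
by exists I, x, n; split => //; split => // i Ii; exact: leq_trans NN' (Nn i Ii).
Qed.

Lemma nondecreasing_W_N s eps : nondecreasing_seq (fun N => W_N T phi Z s N eps).
Proof.
move=> N N' NN'; apply: ereal_inf_le_tmp => _ [I [x [n [c [[Nnc covZ] ->]]]]].
exists I, x, n, c; split => //; split => // i Ii; have [Nn c0] := Nnc i Ii.
by split => //; exact: leq_trans NN' Nn.
Qed.

Lemma M_N_ge0 s N eps : (0 <= M_N T phi Z s N eps)%E.
Proof.
apply/ereal_infP => _ [I [x [n [_ ->]]]]; apply: esum_ge0 => i _.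
by rewrite mule_ge0 ?expeR_ge0 // lee_fin expR_ge0.
Qed.

Lemma Mc_N_ge0 s N eps : (0 <= Mc_N T phi Z s N eps)%E.
Proof.
apply/ereal_infP => _ [I [x [n [_ ->]]]]; apply: esum_ge0 => i _.
by rewrite lee_fin expR_ge0.
Qed.

Lemma W_N_ge0 s N eps : (0 <= W_N T phi Z s N eps)%E.
Proof.
apply/ereal_infP => _ [I [x [n [c [[Nnc _] ->]]]]]; apply: esum_ge0 => i Ii.
rewrite mule_ge0 ?expeR_ge0 // lee_fin mulr_ge0 ?expR_ge0 //.
exact/ltW/(Nnc i Ii).2.
Qed.

Lemma W_N_le_M_N s N eps : (W_N T phi Z s N eps <= M_N T phi Z s N eps)%E.
Proof.
apply: ereal_inf_le_tmp => _ [I [x [n [[Nn covZ] ->]]]].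
exists I, x, n, (fun=> 1); split; last by apply: eq_esum => i _; rewrite mul1r.
split=> [i Ii|z Zz]; first by split; [exact: Nn | exact: ltr01].
have [i Ii Bz] := covZ z Zz.
apply: esum_ge; exists [set i]; first by split; [exact: finite_set1 | move=> j ->].
by rewrite fsbig_set1 indicE mem_set // mul1r.
Qed.

Lemma sup_ball_ge_center m x eps :
  ((phi m x)%:E <= sup_ball T phi m x eps)%E.
Proof. by apply: ereal_sup_ubound; exists x => //; exact: nball_center. Qed.

Lemma sup_ball_le_distortion m x eps :
  (sup_ball T phi m x eps <= (phi m x)%:E + distortion T phi m eps)%E.
Proof.
apply: ge_ereal_sup => _ [y Bxy <-].
apply: le_trans (_ : (phi m x + `|phi m x - phi m y|)%:E <= _)%E.
  by rewrite lee_fin -lerBlDl distrC ler_norm.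
by rewrite EFinD leeD2l //; apply: ereal_sup_ubound; exists x, y.
Qed.

Lemma Mc_N_le_M_N s N eps : (Mc_N T phi Z s N eps <= M_N T phi Z s N eps)%E.
Proof.
apply/ereal_infP => _ [I [x [n [covZ ->]]]].
apply: le_trans (ereal_inf_lbound _) _; first by exists I, x, n.
apply: le_esum => i _; rewrite expRD EFinM lee_pmul2l ?lte_fin ?expR_gt0 //.
by rewrite -[(expR _)%:E]/(expeR (phi _ _)%:E) lee_expeR sup_ball_ge_center.
Qed.

Lemma le_Mc_N_eps s N eps eps' : eps <= eps' ->
  (Mc_N T phi Z s N eps <= Mc_N T phi Z s N eps')%E.
Proof.
move=> le_eps; apply: ereal_inf_le_tmp => _ [I [x [n [[Nn covZ] ->]]]].
exists I, x, n; split => //; split => // z /covZ[i Ii Bz].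
by exists i => //; exact: le_nball Bz.
Qed.

Lemma M_N_le_Mc_N_distortion eps theta :
  (limn_esup (fun n => distortion T phi n eps * (n%:R^-1)%:E) < theta%:E)%E ->
  forall s, \forall N \near \oo,
    (M_N T phi Z (s + theta) N eps <= Mc_N T phi Z s N eps)%E.
Proof.
move=> /limn_esup_lt_near[N1 _ ltN1] s; exists N1.+1 => // N /= N1N.
apply/ereal_infP => _ [I [x [n [covZ ->]]]].
apply: le_trans (ereal_inf_lbound _) _; first by exists I, x, n.
apply: le_esum => i Ii; set m := n i; have Nm : (N <= m)%N := covZ.1 i Ii.
have m0 : 0 < m%:R :> R by rewrite ltr0n (leq_trans _ Nm) // (leq_trans _ N1N).
have dist_lt : (distortion T phi m eps < (m%:R * theta)%:E)%E.
  move: (ltN1 m (leq_trans (ltnW N1N) Nm)) => /=.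
  case: (distortion T phi m eps) => [d||]; rewrite ?ltNye //.
    by rewrite -EFinM !lte_fin ltr_pdivrMr // mulrC.
  by rewrite gt0_mulye ?lte_fin ?invr_gt0.
apply: le_trans (lee_wpmul2l _ (_ : expeR _ <= expeR _)%E) _.
- by rewrite lee_fin expR_ge0.
- rewrite lee_expeR; apply: le_trans (sup_ball_le_distortion _ _ _) _.
  exact: (leeD2l _ (ltW dist_lt)).
rewrite -EFinD /= -EFinM -expRD lee_fin ler_expR; lra.
Qed.

End Covers.

Section WeightedFamily.
Context {R : realType} {X : metricType R}.
Variables (T : X -> X) (phi : nat -> X -> R) (Z : set X).
Hypotheses (cpt : compact [set: X]) (contT : continuous T).
Variables (theta eps s : R) (N : nat).
Variables (I : set nat) (x : nat -> X) (n : nat -> nat) (c : nat -> R).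
Hypothesis theta_gt0 : 0 < theta.
Hypothesis family : is_wfamily T Z N eps I x n c.
Hypothesis radius_doubling : forall {m}, (N <= m)%N ->
  expR (- (m%:R * eps)) + expR (- (m%:R * eps)) <= expR (- (m%:R * (eps / 2))).
Hypothesis geometric_tail_lt1 : expR (- theta) ^+ N / (1 - expR (- theta)) < 1.

Let level m := I `&` [set i | n i = m].
Let weight z i : \bar R := (c i * \1_(nball T (n i) (x i) eps) z)%:E.
Let term i : \bar R := ((c i * expR (- ((n i)%:R * s)))%:E
                         * expeR (sup_ball T phi (n i) (x i) eps))%E.
Let heavy m := [set z | Z z /\
  ((expR (- (m%:R * theta)))%:E < \esum_(i in level m) weight z i)%E].

Let c_gt0 i : I i -> 0 < c i. Proof. by move=> /(family.1 i) []. Qed.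

Let term_ge0 i : I i -> (0 <= term i)%E.
Proof.
move=> Ii; rewrite mule_ge0 ?expeR_ge0 // lee_fin mulr_ge0 ?expR_ge0 //.
exact/ltW/c_gt0.
Qed.

Let trivIset_level : trivIset setT level.
Proof. by move=> i j _ _ [k [[_ <-] [_ <-]]]. Qed.

Let I_bigcup_level : I = \bigcup_(m in [set m | (N <= m)%N]) level m.
Proof.
apply/seteqP; split=> [i Ii | i [m _ []] //].
by exists (n i); [exact: (family.1 i Ii).1 | split].
Qed.

Let esum_I_level (a : nat -> \bar R) : (forall i, I i -> (0 <= a i)%E) ->
  \esum_(i in I) a i = \esum_(m in [set m | (N <= m)%N]) \esum_(i in level m) a i.
Proof.
move=> a0; rewrite {1}I_bigcup_level esum_bigcup //.
  exact: sub_trivIset (subsetT _) trivIset_level.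
by move=> i [m _ [Ii _]]; exact: a0.
Qed.

(* Otherwise the total weight at [z] would be at most
   [sum_(m >= N) e^(-m theta) < 1]. *)
Lemma heavy_level_exists z : Z z -> exists2 m, (N <= m)%N & heavy m z.
Proof.
move=> Zz; apply: contrapT => no_heavy.
have light m : [set m | (N <= m)%N] m ->
    (\esum_(i in level m) weight z i <= (expR (- theta) ^+ m)%:E)%E.
  move=> Nm; rewrite -expRM_natl mulrN leNgt; apply/negP => heavy_m.
  by apply: no_heavy; exists m.
have := family.2 z Zz; rewrite esum_I_level; last first.
  by move=> i Ii; rewrite lee_fin mulr_ge0 //; exact/ltW/c_gt0.
move=> /le_trans/(_ (le_esum light)); rewrite esum_geometric_tail; last first.
  by rewrite expR_ge0 /= -[ltRHS]expR0 ltr_expR oppr_lt0.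
by rewrite lee_fin leNgt geometric_tail_lt1.
Qed.

Let covering m a := level m `&` [set i | nball T m (x i) eps a].

Lemma heavy_point_le m a : heavy m a ->
  ((expR (- (m%:R * (s + theta)) + phi m a))%:E <=
   \esum_(i in covering m a) term i)%E.
Proof.
move=> [_]; have -> :
    \esum_(i in level m) weight a i = \esum_(i in covering m a) (c i)%:E.
  rewrite [RHS]esum_mkcondr; apply: eq_esum => i [_ /= nim].
  rewrite /weight nim indicE; case: (pselect (nball T m (x i) eps a)) => Ba.
    by rewrite !mem_set //= mulr1.
  by rewrite !memNset //= mulr0.
have -> : - (m%:R * (s + theta)) + phi m a =
    - (m%:R * theta) + (- (m%:R * s) + phi m a) by ring.
rewrite expRD => /(lt_esum_mulr _ (expR_ge0 _)) /le_trans; apply.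
apply: le_esum => i [[Ii /= nim] Ba].
rewrite /term nim expRD mulrA EFinM lee_wpmul2l //.
  by rewrite lee_fin mulr_ge0 ?expR_ge0 //; exact/ltW/c_gt0.
rewrite -[(expR _)%:E]/(expeR (phi m a)%:E) lee_expeR.
by apply: ereal_sup_ubound; exists a.
Qed.

(* A ball of radius [r] meets a [2r]-separated set at most once, so the
   sets [covering m a], [a] in [K], are pairwise disjoint. *)
Lemma separated_heavy_sum_le m K :
  bowen_separated T m (expR (- (m%:R * eps))) K -> (forall a, a \in K -> heavy m a) ->
  (\esum_(j in [set j | (j < size K)%N])
     (expR (- (m%:R * (s + theta)) + phi m (nth (x 0%N) K j)))%:E
   <= \esum_(i in level m) term i)%E.
Proof.
move=> [uniqK sepK] heavyK.
set J := [set j | (j < size K)%N]; set a := nth (x 0%N) K.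
pose S j := [set i | J j /\ covering m (a j) i].
have S_le j : J j -> ((expR (- (m%:R * (s + theta)) + phi m (a j)))%:E
    <= \esum_(i in S j) term i)%E.
  move=> Jj; rewrite (_ : S j = covering m (a j)); last first.
    by apply/seteqP; split=> [i [] | i] //.
  by apply: heavy_point_le; apply: heavyK; exact: mem_nth.
have trivIset_S : trivIset setT S.
  move=> j j' _ _ [i [[Jj [_ Bj]] [Jj' [_ Bj']]]].
  apply/eqP; rewrite -(nth_uniq (x 0%N) Jj Jj' uniqK); apply/negP => /negP ajj'.
  apply: (sepK _ _ (mem_nth _ Jj) (mem_nth _ Jj') ajj').
  exact: bowen_ball_triangle (bowen_ball_sym Bj) Bj'.
apply: le_trans (le_esum S_le) _; rewrite -esum_bigcup; last 2 first.
- exact: sub_trivIset (subsetT _) trivIset_S.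
- by move=> i [j _ [_ [[Ii _] _]]]; exact: term_ge0.
by apply: subset_le_esum => i [j _ [_ []]].
Qed.

(* Each heavy level [m] is covered by the [e^(-m eps/2)]-balls around a maximal
   separated subset of it; all these centres, indexed by pairs [(m, j)]
   encoded as naturals, form a cover admissible for [Mc_N]. *)
Lemma Mc_N_le_wfamily_sum :
  (Mc_N T phi Z (s + theta) N (eps / 2) <= \esum_(i in I) term i)%E.
Proof.
have [K KP] := choice (fun m => @compact_maximal_bowen_separated _ _ T m
  (expR (- (m%:R * eps))) (heavy m) cpt contT (expR_gt0 _)).
pose P := [set m | (N <= m)%N] `*`` (fun m => [set j | (j < size (K m))%N]).
pose x' i := if (unpickle i : option (nat * nat)) is Some p
  then nth (x 0%N) (K p.1) p.2 else x 0%N.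
pose n' i := if (unpickle i : option (nat * nat)) is Some p then p.1 else N.
have cover' : is_cover T Z N (eps / 2) (pickle @` P) x' n'.
  split=> [_ [p [Np _] <-] | z Zz]; first by rewrite /n' pickleK.
  have [m Nm heavy_mz] := heavy_level_exists z Zz.
  have [_ _ /(_ z heavy_mz)[b bK Bbz]] := KP m.
  exists (pickle (m, index b (K m))).
    by exists (m, index b (K m)); rewrite // /P /= index_mem.
  rewrite /x' /n' pickleK /= nth_index //.
  exact: le_bowen_ball (radius_doubling Nm) _ Bbz.
apply: le_trans (ereal_inf_lbound _) _; first by exists (pickle @` P), x', n'.
rewrite esum_image; last by move=> p q _ _ /(pcan_inj pickleK).
under eq_esum => p _ do rewrite /x' /n' pickleK.
rewrite -(esum_esum (a := fun m j =>
  (expR (- (m%:R * (s + theta)) + phi m (nth (x 0%N) (K m) j)))%:E)); last first.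
  by move=> *; rewrite lee_fin expR_ge0.
rewrite (esum_I_level _ term_ge0); apply: le_esum => m _.
by have [sepK heavyK _] := KP m; exact: separated_heavy_sum_le.
Qed.

End WeightedFamily.

Lemma near_radius_doubling {R : realType} {eps : R} : 0 < eps ->
  \forall m \near \oo,
    expR (- (m%:R * eps)) + expR (- (m%:R * eps)) <= expR (- (m%:R * (eps / 2))).
Proof.
move=> eps0; apply: filterS (nbhs_infty_ger (2 / eps)) => m le_m.
have two_le : 2 <= expR (m%:R * (eps / 2)).
  apply: le_trans (expR_ge1Dx _); rewrite -lerBlDl (_ : 2 - 1 = 1 :> R); last lra.
  by rewrite mulrA ler_pdivlMr // mul1r -ler_pdivrMr.
rewrite (_ : - (m%:R * (eps / 2)) = - (m%:R * eps) + m%:R * (eps / 2)); last by field.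
rewrite expRD; have := ler_wpM2l (expR_ge0 (- (m%:R * eps))) two_le; lra.
Qed.

Lemma near_geometric_tail_lt1 {R : realType} {theta : R} : 0 < theta ->
  \forall N \near \oo, expR (- theta) ^+ N / (1 - expR (- theta)) < 1.
Proof.
move=> theta0; set q := expR (- theta).
have q_lt1 : q < 1 by rewrite /q -[ltRHS]expR0 ltr_expR oppr_lt0.
have q1_gt0 : 0 < 1 - q by rewrite subr_gt0.
have q_norm : `|q| < 1 by rewrite ger0_norm ?expR_ge0.
apply: filterS (cvgr0_norm_lt (geometric 1 q) (cvg_geometric 1 q_norm) _ q1_gt0).
by move=> N /=; rewrite mul1r ger0_norm ?exprn_ge0 ?expR_ge0 // ltr_pdivrMr // mul1r.
Qed.

Lemma Mc_N_half_le_W_N {R : realType} {X : metricType R} (T : X -> X)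
    (phi : nat -> X -> R) (Z : set X) {theta eps : R} :
  compact [set: X] -> continuous T -> 0 < theta -> 0 < eps ->
  \forall N \near \oo, forall s,
    (Mc_N T phi Z (s + theta) N (eps / 2) <= W_N T phi Z s N eps)%E.
Proof.
move=> cpt contT theta0 eps0.
have [N0 _ N0_good] :=
  filterI (near_radius_doubling eps0) (near_geometric_tail_lt1 theta0).
exists N0 => // N /= N0N s; apply/ereal_infP => _ [I [x [n [c [family ->]]]]].
apply: Mc_N_le_wfamily_sum => // [m Nm|]; last exact: (N0_good N N0N).2.
exact: (N0_good m (leq_trans N0N Nm)).1.
Qed.

Lemma cvg_squeeze_halving {R : realType} {f d g : R -> \bar R} :
  {in `]0, +oo[ &, nondecreasing_fun f} -> d e @[e --> 0^'+] --> 0%E ->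
  (\forall e \near 0^'+, (f (e / 2)%R <= g e <= f e + d e)%E) ->
  g e @[e --> 0^'+] --> ereal_inf (f @` `]0, +oo[).
Proof.
move=> ndf d0 fgd; set L := ereal_inf _.
have f_cvg : f e @[e --> 0^'+] --> L.
  exact: nondecreasing_at_right_cvge.
apply: (squeeze_cvge (f := fun=> L) (h := fun e => f e + d e)%E); last 2 first.
- exact: cvg_cst.
- by rewrite -[L]adde0; apply: cvgeD => //; exact: fin_num_adde_defl.
apply: filterS (filterI fgd (nbhs_right_gt 0)) => e [/andP[fg ->] e0].
rewrite andbT; apply: le_trans fg; apply: ereal_inf_lbound; exists (e / 2) => //.
by rewrite /= in_itv /= andbT divr_gt0.
Qed.

Section Pressures.
Context {R : realType} {X : metricType R}.
Variables (T : X -> X) (phi : nat -> X -> R) (Z : set X).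

Definition Mc_s s eps := limn (fun N => Mc_N T phi Z s N eps).
Definition Mc_eps eps := critical_exponent (Mc_s ^~ eps).

Let distortion_rate eps :=
  limn_esup (fun n => (distortion T phi n eps * (n%:R^-1)%:E)%E).

Lemma le_Mc_eps {eps eps'} : eps <= eps' -> (Mc_eps eps <= Mc_eps eps')%E.
Proof.
move=> le_eps; apply: (@critical_exponent_limn_le _ (fun s N => Mc_N T phi Z s N eps)
  (fun s N => Mc_N T phi Z s N eps')) => s.
- exact: nondecreasing_Mc_N.
- exact: nondecreasing_Mc_N.
- by move=> N; exact: Mc_N_ge0.
- by move=> N; exact: le_Mc_N_eps.
Qed.

Lemma Mc_eps_le_M_eps eps : (Mc_eps eps <= M_eps T phi Z eps)%E.
Proof.
apply: (@critical_exponent_limn_le _ (fun s N => Mc_N T phi Z s N eps)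
  (fun s N => M_N T phi Z s N eps)) => s.
- exact: nondecreasing_Mc_N.
- exact: nondecreasing_M_N.
- by move=> N; exact: Mc_N_ge0.
- by move=> N; exact: Mc_N_le_M_N.
Qed.

Lemma W_eps_le_M_eps eps : (W_eps T phi Z eps <= M_eps T phi Z eps)%E.
Proof.
apply: (@critical_exponent_limn_le _ (fun s N => W_N T phi Z s N eps)
  (fun s N => M_N T phi Z s N eps)) => s.
- exact: nondecreasing_W_N.
- exact: nondecreasing_M_N.
- by move=> N; exact: W_N_ge0.
- by move=> N; exact: W_N_le_M_N.
Qed.

Lemma M_eps_le_Mc_eps_distortion eps : distortion_rate eps \is a fin_num ->
  (M_eps T phi Z eps <= Mc_eps eps + distortion_rate eps)%E.
Proof.
move=> /fineK rate_fin; apply/lee_addgt0Pr => k k0.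
rewrite -rate_fin -addeA -EFinD.
apply: (@critical_exponent_limn_le_shift _ (fun s N => M_N T phi Z s N eps)
  (fun s N => Mc_N T phi Z s N eps)) => s.
- exact: nondecreasing_M_N.
- exact: nondecreasing_Mc_N.
- by move=> N; exact: M_N_ge0.
apply: M_N_le_Mc_N_distortion.
by rewrite -/(distortion_rate eps) -rate_fin lte_fin ltrDl.
Qed.

Lemma Mc_eps_half_le_W_eps eps : compact [set: X] -> continuous T -> 0 < eps ->
  (Mc_eps (eps / 2) <= W_eps T phi Z eps)%E.
Proof.
move=> cpt contT eps0; apply/lee_addgt0Pr => theta theta0.
apply: (@critical_exponent_limn_le_shift _ (fun s N => Mc_N T phi Z s N (eps / 2))
  (fun s N => W_N T phi Z s N eps)) => s.
- exact: nondecreasing_Mc_N.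
- exact: nondecreasing_W_N.
- by move=> N; exact: Mc_N_ge0.
move: (Mc_N_half_le_W_N T phi Z cpt contT theta0 eps0).
by apply: filterS => N /(_ s).
Qed.

Lemma P_B_eq_P_WB : compact [set: X] -> continuous T -> tempered_distortion T phi ->
  P_B T phi Z = P_WB T phi Z.
Proof.
move=> cpt contT tempered.
have [rate_fin _] := (fine_cvgP _ _).1 tempered.
have Mc_nd : {in `]0, +oo[ &, nondecreasing_fun Mc_eps}.
  by move=> e e' _ _; exact: le_Mc_eps.
have near_bounds : \forall e \near 0^'+, (Mc_eps (e / 2) <= W_eps T phi Z e)%E /\
    (M_eps T phi Z e <= Mc_eps e + distortion_rate e)%E.
  apply: filterS (filterI rate_fin (nbhs_right_gt 0)) => e [rate_e e0].
  by split; [exact: Mc_eps_half_le_W_eps | exact: M_eps_le_Mc_eps_distortion].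
have M_cvg : M_eps T phi Z e @[e --> 0^'+] --> ereal_inf (Mc_eps @` `]0, +oo[).
  apply: cvg_squeeze_halving Mc_nd tempered _.
  apply: filterS (filterI near_bounds (nbhs_right_gt 0)) => e [[_ ->] e0].
  rewrite andbT (le_trans (le_Mc_eps (_ : e / 2 <= e)) (Mc_eps_le_M_eps e)) //.
  lra.
have W_cvg : W_eps T phi Z e @[e --> 0^'+] --> ereal_inf (Mc_eps @` `]0, +oo[).
  apply: cvg_squeeze_halving Mc_nd tempered _.
  apply: filterS near_bounds => e [-> M_le].
  by rewrite (le_trans (W_eps_le_M_eps e)).
by rewrite /P_B /P_WB (cvg_lim _ M_cvg) // (cvg_lim _ W_cvg).
Qed.

End Pressures.

Theorem mainTheorem3 (R : realType) (X : metricType R) (T : X -> X)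
    (phi : nat -> X -> R) (Z : set X) :
  compact [set: X] ->
  continuous T ->
  (forall n, continuous (phi n)) ->
  tempered_distortion T phi ->
  Z !=set0 ->
  (forall theta : R, 0 < theta ->
     exists2 eps0 : R, 0 < eps0 &
       forall eps : R, 0 < eps -> eps < eps0 ->
         exists N0 : nat, forall (N : nat) (s : R), (N0 <= N)%N ->
           (Mc_N T phi Z (s + theta) N (eps / 2) <= W_N T phi Z s N eps)%E /\
           (W_N T phi Z s N eps <= M_N T phi Z s N eps)%E)
  /\ P_B T phi Z = P_WB T phi Z.
Proof.
move=> cpt contT _ tempered _; split; last exact: P_B_eq_P_WB.
move=> theta theta0; exists 1 => // eps eps0 _.
have [N0 _ half_le] := Mc_N_half_le_W_N T phi Z cpt contT theta0 eps0.
by exists N0 => N s N0N; split; [exact: half_le | exact: W_N_le_M_N].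
Qed.
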